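(* For all $c\in\mathbb{C}$ with $c\neq-\frac{22}{5}$ and all even integers $n\ge16$, either $F(n-4,c)\neq0$ or $G(n-6,c)\neq0$. Equivalently, the variety $V\subset\mathbb{C}^2$ defined by $F(n-4,c)=0$ and $G(n-6,c)=0$ has no points $(c,n)$ with $c\ne -\frac{22}{5}$ and $n\ge16$ an even integer.
   Context: Define the rational functions $$F(n,c)=-\frac{(10+n)\big(p_0(c)+p_1(c)n+p_2(c)n^2+p_3(c)n^3\big)}{36(22+5c)(1+n)(3+n)(4+n)},$$ with $p_0(c)=720+384c+12c^2$, $p_1(c)=-5286+125c+19c^2$, $p_2(c)=-2160+40c+8c^2$, $p_3(c)=-186+11c+c^2$, and $$G(n,c)=-\frac{(12+n)\big(q_0(c)+q_1(c)n+q_2(c)n^2+q_3(c)n^3+q_4(c)n^4\big)}{1260(22+5c)(1+n)(3+n)(4+n)(5+n)},$$ with $q_0(c)=-466200+20580c+2100c^2$, $q_1(c)=-183780-46096c+3745c^2$, $q_2(c)=-74076-31732c+2065c^2$, $q_3(c)=-19116-5624c+455c^2$, $q_4(c)=-1308-248c+35c^2$. *)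

From HB Require Import structures.
From mathcomp Require Import all_boot all_order all_algebra.
From mathcomp Require Import complex.
From mathcomp Require Import reals.
Set Implicit Arguments. Unset Strict Implicit. Unset Printing Implicit Defensive.
Import Order.TTheory GRing.Theory Num.Theory.
Local Open Scope ring_scope.

Section FG.
Variable K : fieldType.

Definition p0 (c : K) : K := 720 + 384 * c + 12 * c ^+ 2.
Definition p1 (c : K) : K := - 5286 + 125 * c + 19 * c ^+ 2.
Definition p2 (c : K) : K := - 2160 + 40 * c + 8 * c ^+ 2.
Definition p3 (c : K) : K := - 186 + 11 * c + c ^+ 2.

Definition Ffun (n c : K) : K :=
  - ((10 + n) * (p0 c + p1 c * n + p2 c * n ^+ 2 + p3 c * n ^+ 3))
    / (36 * (22 + 5 * c) * (1 + n) * (3 + n) * (4 + n)).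

Definition q0 (c : K) : K := - (466 * 1000 + 200) + (20 * 1000 + 580) * c + 2100 * c ^+ 2.
Definition q1 (c : K) : K := - (183 * 1000 + 780) - (46 * 1000 + 96) * c + 3745 * c ^+ 2.
Definition q2 (c : K) : K := - (74 * 1000 + 76) - (31 * 1000 + 732) * c + 2065 * c ^+ 2.
Definition q3 (c : K) : K := - (19 * 1000 + 116) - 5624 * c + 455 * c ^+ 2.
Definition q4 (c : K) : K := - 1308 - 248 * c + 35 * c ^+ 2.

Definition Gfun (n c : K) : K :=
  - ((12 + n) * (q0 c + q1 c * n + q2 c * n ^+ 2 + q3 c * n ^+ 3 + q4 c * n ^+ 4))
    / (1260 * (22 + 5 * c) * (1 + n) * (3 + n) * (4 + n) * (5 + n)).
End FG.

(** The numerators of [F] and [G] are quadratic in [c].  Eliminating [c] through the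
    resultant of the two quadratics leaves a polynomial in [m = n - 6] that
    factors as [-2304 m^2 (m+3) (m+5)^2 (m+8) (m+9) (m+10) T(m)], where [T]
    has positive coefficients. *)
From HB Require Import structures.
From mathcomp Require Import all_boot all_order all_algebra.
From mathcomp Require Import complex.
From mathcomp Require Import reals.
From mathcomp Require Import ring.
Set Implicit Arguments. Unset Strict Implicit. Unset Printing Implicit Defensive.
Import Order.TTheory GRing.Theory Num.Theory.
Local Open Scope ring_scope.

Section QuadraticResultant.
Variable R : comPzRingType.

Definition res_quad (a b e a' b' e' : R) : R :=
  (a * e' - a' * e) ^+ 2 - (a * b' - a' * b) * (b * e' - b' * e).

(* The resultant lies in the ideal generated by the two quadratics. *)
Lemma res_quad_common_root (a b e a' b' e' c : R) :
  a * c ^+ 2 + b * c + e = 0 -> a' * c ^+ 2 + b' * c + e' = 0 ->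
  res_quad a b e a' b' e' = 0.
Proof.
move=> P0 Q0.
have -> : res_quad a b e a' b' e' =
    ((a * b' - a' * b) * c - (a * e' - a' * e))
      * (a' * (a * c ^+ 2 + b * c + e) - a * (a' * c ^+ 2 + b' * c + e'))
    + (a * b' - a' * b)
      * (b' * (a * c ^+ 2 + b * c + e) - b * (a' * c ^+ 2 + b' * c + e')).
  by rewrite /res_quad; ring.
by rewrite P0 Q0 !(mulr0, subrr, addr0).
Qed.

End QuadraticResultant.

Section Numerators.
Variable K : fieldType.
Implicit Types m c : K.

Definition Fc2 m : K := 12 + 19 * m + 8 * m ^+ 2 + m ^+ 3.
Definition Fc1 m : K := 384 + 125 * m + 40 * m ^+ 2 + 11 * m ^+ 3.
Definition Fc0 m : K := 720 - (5 * 1000 + 286) * m - 2160 * m ^+ 2 - 186 * m ^+ 3.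

Definition Gc2 m : K := 2100 + 3745 * m + 2065 * m ^+ 2 + 455 * m ^+ 3 + 35 * m ^+ 4.
Definition Gc1 m : K := (20 * 1000 + 580) - (46 * 1000 + 96) * m
  - (31 * 1000 + 732) * m ^+ 2 - (5 * 1000 + 624) * m ^+ 3 - 248 * m ^+ 4.
Definition Gc0 m : K := - (466 * 1000 + 200) - (183 * 1000 + 780) * m
  - (74 * 1000 + 76) * m ^+ 2 - (19 * 1000 + 116) * m ^+ 3 - 1308 * m ^+ 4.

Lemma Ffun_eq0 m c :
  36 * (22 + 5 * c) * (1 + m) * (3 + m) * (4 + m) != 0 -> 10 + m != 0 ->
  Ffun m c = 0 -> Fc2 m * c ^+ 2 + Fc1 m * c + Fc0 m = 0.
Proof.
move=> den_neq0 m10_neq0 /eqP.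
rewrite /Ffun mulf_eq0 oppr_eq0 invr_eq0 (negPf den_neq0) orbF.
rewrite mulf_eq0 (negPf m10_neq0) => /eqP num0.
by rewrite -num0 /Fc2 /Fc1 /Fc0 /p0 /p1 /p2 /p3; ring.
Qed.

Lemma Gfun_eq0 m c :
  1260 * (22 + 5 * c) * (1 + m) * (3 + m) * (4 + m) * (5 + m) != 0 ->
  12 + m != 0 ->
  Gfun m c = 0 -> Gc2 m * c ^+ 2 + Gc1 m * c + Gc0 m = 0.
Proof.
move=> den_neq0 m12_neq0 /eqP.
rewrite /Gfun mulf_eq0 oppr_eq0 invr_eq0 (negPf den_neq0) orbF.
rewrite mulf_eq0 (negPf m12_neq0) => /eqP num0.
by rewrite -num0 /Gc2 /Gc1 /Gc0 /q0 /q1 /q2 /q3 /q4; ring.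
Qed.

(* With [m = n - 6], the paper's [F(n-4, c)] and [G(n-6, c)] are taken at [m + 2] and [m]. *)
Definition resFG m : K :=
  res_quad (Fc2 (m + 2)) (Fc1 (m + 2)) (Fc0 (m + 2)) (Gc2 m) (Gc1 m) (Gc0 m).

Definition resFG_sextic m : K :=
  ((21 * 1000 + 655) * 1000 + 722) + ((45 * 1000 + 971) * 1000 + 131) * m
  + ((32 * 1000 + 152) * 1000 + 909) * m ^+ 2
  + ((10 * 1000 + 543) * 1000 + 770) * m ^+ 3 + (1774 * 1000 + 328) * m ^+ 4
  + (148 * 1000 + 139) * m ^+ 5 + 4881 * m ^+ 6.

Lemma resFG_factor m : resFG m =
  - 2304 * (m + 10) * (m + 9) * (m + 8) * (m + 5) ^+ 2 * (m + 3) * m ^+ 2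
  * resFG_sextic m.
Proof. by rewrite /resFG /res_quad /Fc2 /Fc1 /Fc0 /Gc2 /Gc1 /Gc0 /resFG_sextic; ring. Qed.

End Numerators.

Section PositiveShift.
Variables (K : numFieldType) (m : K).
Hypothesis m_gt0 : 0 < m.

Lemma add_nat_gt0 (k : nat) : 0 < m + k%:R.
Proof. by rewrite ltr_wpDr. Qed.

Lemma nat_add_neq0 (k : nat) : k%:R + m != 0.
Proof. by rewrite addrC gt_eqF ?add_nat_gt0. Qed.

Lemma resFG_sextic_gt0 : 0 < resFG_sextic m.
Proof.
have m_ge0 := ltW m_gt0.
by rewrite /resFG_sextic !ltr_wpDr ?(mulr_ge0, exprn_ge0) -?(natrM, natrD) ?ler0n.
Qed.

Lemma resFG_neq0 : resFG m != 0.
Proof.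
rewrite resFG_factor !mulf_neq0 ?oppr_eq0 ?expf_neq0 ?pnatr_eq0 ?gt_eqF //.
all: by rewrite ?add_nat_gt0 ?resFG_sextic_gt0.
Qed.

Lemma FG_no_common_zero c :
  22 + 5 * c != 0 -> Ffun (m + 2) c != 0 \/ Gfun m c != 0.
Proof.
move=> c_ok; have [F0|] := eqVneq (Ffun (m + 2) c) 0; last by left.
right; apply/eqP => G0; move/eqP: resFG_neq0; apply.
have shift2 (k : nat) : k%:R + (m + 2) = m + (k + 2)%:R by rewrite natrD; ring.
apply: (res_quad_common_root (c := c)).
- apply: Ffun_eq0 F0; last by rewrite shift2 addrC nat_add_neq0.
  by rewrite !mulf_neq0 ?pnatr_eq0 // -[1]/(1%:R) shift2 addrC nat_add_neq0.
- apply: Gfun_eq0 G0; last exact: nat_add_neq0.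
  by rewrite !mulf_neq0 ?pnatr_eq0 ?nat_add_neq0 // -[1]/(1%:R) nat_add_neq0.
Qed.

End PositiveShift.

Local Open Scope complex_scope.

Theorem theorem6p5 (R : realType) (c : R[i]) (n : nat) :
  c != - (22%:R / 5%:R) -> ~~ odd n -> (16 <= n)%N ->
  Ffun (n%:R - 4%:R) c != 0 \/ Gfun (n%:R - 6%:R) c != 0.
Proof.
move=> c_neq _ n_ge16.
have n_eq : n = ((n - 6) + 6)%N by rewrite subnK // (leq_trans _ n_ge16).
set m : R[i] := (n - 6)%:R.
have -> : n%:R - 4%:R = m + 2 :> R[i] by rewrite {1}n_eq natrD /m; ring.
have -> : n%:R - 6%:R = m :> R[i] by rewrite {1}n_eq natrD /m; ring.
apply: FG_no_common_zero.
  by rewrite ltr0n subn_gt0 (leq_trans _ n_ge16).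
apply: contra_neq c_neq => c5_eq0.
have -> : c = (22 + 5 * c) / 5 - 22 / 5 by field.
by rewrite c5_eq0 mul0r sub0r.
Qed.
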